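(* Consider the asynchronous multi-channel network model described in the context, running Algorithm 1 with frame length $L$, and assume the maximum clock drift rate satisfies $\delta \le \frac{1}{7}$. Then for every frame $f$ of any node and every other node $u$, the number of frames of $u$ that overlap $f$ in real time is at most $3$.
   Context: Each node $u$ has a clock $C_u$ (a function of real time) such that for all real times $t$ and all $\Delta t \ge 0$, $(1-\delta)\Delta t \le C_u(t+\Delta t) - C_u(t) \le (1+\delta)\Delta t$, where $0 \le \delta < 1$ is the maximum drift rate; clocks of different nodes may have arbitrary offsets. In Algorithm 1, each node, from the moment it starts (at an arbitrary real time), partitions its local time into consecutive frames each of length $L$ as measured by its own clock (the $k$-th frame occupies the real-time interval during which its clock reads values in $[C^{0}+(k-1)L,\, C^{0}+kL)$, where $C^0$ is its clock value at start), and each frame into three consecutive slots of local length $L/3$. Frames are regarded as real-time intervals; two frames overlap if these intervals intersect. *)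

From Stdlib Require Import Reals List.
Open Scope R_scope.

Definition drift_bounded (delta : R) (C : R -> R) : Prop :=
  forall t dt : R, 0 <= dt ->
    (1 - delta) * dt <= C (t + dt) - C t <= (1 + delta) * dt.

(* Real time t lies in the k-th frame (k >= 1) of a node with clock C,
   started at real time t0 (so C^0 = C t0), frame length L:
   C^0 + (k-1) L <= C t < C^0 + k L. *)
Definition in_frame (C : R -> R) (t0 L : R) (k : nat) (t : R) : Prop :=
  C t0 + (INR k - 1) * L <= C t < C t0 + INR k * L.

Definition frames_overlap (Cv : R -> R) (tv : R) (k : nat)
                          (Cu : R -> R) (tu : R) (j : nat) (L : R) : Prop :=
  exists t : R, in_frame Cv tv L k t /\ in_frame Cu tu L j t.

(** Two instants inside one frame of v are at most L apart on v's clock, hence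
    less than L / (1 - δ) apart in real time, hence less than
    L (1 + δ) / (1 - δ) <= 2 L apart on u's clock as soon as δ <= 1/3.
    So the frames of u met by a frame of v have indices within distance 2 of
    each other, and there are at most three of them. *)

From Stdlib Require Import Reals List Lra Lia Psatz.
Open Scope R_scope.

Lemma drift_bounded_dist_ge (delta : R) (C : R -> R) (t1 t2 : R) :
  drift_bounded delta C ->
  (1 - delta) * Rabs (t2 - t1) <= Rabs (C t2 - C t1).
Proof.
  intros HC.
  destruct (Rle_lt_dec t1 t2) as [h12 | h21].
  - destruct (HC t1 (t2 - t1)) as [lo _]; [lra |].
    replace (t1 + (t2 - t1)) with t2 in lo by ring.
    rewrite (Rabs_right (t2 - t1)) by lra.
    apply (Rle_trans _ _ _ lo), RRle_abs.
  - destruct (HC t2 (t1 - t2)) as [lo _]; [lra |].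
    replace (t2 + (t1 - t2)) with t1 in lo by ring.
    rewrite Rabs_minus_sym, (Rabs_minus_sym (C t2)).
    rewrite (Rabs_right (t1 - t2)) by lra.
    apply (Rle_trans _ _ _ lo), RRle_abs.
Qed.

Lemma drift_bounded_dist_le (delta : R) (C : R -> R) (t1 t2 : R) :
  0 <= delta -> drift_bounded delta C ->
  Rabs (C t2 - C t1) <= (1 + delta) * Rabs (t2 - t1).
Proof.
  intros d0 HC.
  destruct (Rle_lt_dec t1 t2) as [h12 | h21].
  - destruct (HC t1 (t2 - t1)) as [lo hi]; [lra |].
    replace (t1 + (t2 - t1)) with t2 in lo, hi by ring.
    rewrite (Rabs_right (t2 - t1)) by lra.
    apply Rabs_le; nra.
  - destruct (HC t2 (t1 - t2)) as [lo hi]; [lra |].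
    replace (t2 + (t1 - t2)) with t1 in lo, hi by ring.
    rewrite Rabs_minus_sym, (Rabs_minus_sym t2).
    rewrite (Rabs_right (t1 - t2)) by lra.
    apply Rabs_le; nra.
Qed.

Lemma in_frame_same_clock_dist (C : R -> R) (t0 L : R) (k : nat) (t1 t2 : R) :
  in_frame C t0 L k t1 -> in_frame C t0 L k t2 ->
  Rabs (C t2 - C t1) < L.
Proof. intros [a1 b1] [a2 b2]. apply Rabs_def1; nra. Qed.

Lemma in_frame_index_gap (C : R -> R) (t0 L : R) (j1 j2 : nat) (t1 t2 : R) :
  in_frame C t0 L j1 t1 -> in_frame C t0 L j2 t2 ->
  (INR j2 - INR j1 - 1) * L < C t2 - C t1.
Proof. intros [a1 b1] [a2 b2]. nra. Qed.

Lemma overlap_clock_dist (delta L : R) (Cv Cu : R -> R) (tv : R) (k : nat)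
    (t1 t2 : R) :
  0 <= delta -> delta <= 1 / 3 ->
  drift_bounded delta Cv -> drift_bounded delta Cu ->
  in_frame Cv tv L k t1 -> in_frame Cv tv L k t2 ->
  Rabs (Cu t2 - Cu t1) < 2 * L.
Proof.
  intros d0 d1 Dv Du F1 F2.
  pose proof (in_frame_same_clock_dist Cv tv L k t1 t2 F1 F2) as Hv.
  pose proof (drift_bounded_dist_ge delta Cv t1 t2 Dv) as Hreal.
  pose proof (drift_bounded_dist_le delta Cu t1 t2 d0 Du) as Hu.
  pose proof (Rabs_pos (t2 - t1)).
  assert ((1 + delta) * Rabs (t2 - t1) <= 2 * ((1 - delta) * Rabs (t2 - t1)))
    by nra.
  lra.
Qed.

Lemma overlap_index_gap (delta L : R) (Cv Cu : R -> R) (tv tu : R)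
    (k j1 j2 : nat) (t1 t2 : R) :
  0 <= delta -> delta <= 1 / 3 -> 0 < L ->
  drift_bounded delta Cv -> drift_bounded delta Cu ->
  in_frame Cv tv L k t1 -> in_frame Cu tu L j1 t1 ->
  in_frame Cv tv L k t2 -> in_frame Cu tu L j2 t2 ->
  (j2 <= j1 + 2)%nat.
Proof.
  intros d0 d1 HL Dv Du Fv1 Fu1 Fv2 Fu2.
  pose proof (overlap_clock_dist delta L Cv Cu tv k t1 t2 d0 d1 Dv Du Fv1 Fv2)
    as Hu.
  pose proof (in_frame_index_gap Cu tu L j1 j2 t1 t2 Fu1 Fu2) as Hgap.
  pose proof (Rle_abs (Cu t2 - Cu t1)).
  assert (Hidx : INR j2 < INR j1 + 3).
  { apply (Rmult_lt_reg_r L); nra. }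
  replace 3 with (INR 3) in Hidx by (simpl; ring).
  rewrite <- plus_INR in Hidx.
  apply INR_lt in Hidx. lia.
Qed.

Lemma exists_min_In (s : list nat) :
  s <> nil -> exists m, In m s /\ forall j, In j s -> (m <= j)%nat.
Proof.
  induction s as [| a s IH]; intros Hs; [congruence |].
  destruct s as [| b s'].
  - exists a. split; [left; reflexivity |]. intros j [<- | []]; lia.
  - destruct IH as [m [Hm Hmin]]; [discriminate |].
    destruct (Nat.le_gt_cases a m).
    + exists a. split; [left; reflexivity |].
      intros j [<- | Hj]; [lia |]. specialize (Hmin j Hj). lia.
    + exists m. split; [right; exact Hm |].
      intros j [<- | Hj]; [lia | auto].
Qed.

Lemma NoDup_length_le_of_spread (s : list nat) (d : nat) :
  NoDup s -> (forall i j, In i s -> In j s -> (j <= i + d)%nat) ->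
  (length s <= S d)%nat.
Proof.
  intros Hnd Hspread.
  destruct s as [| a s']; [simpl; lia |].
  destruct (exists_min_In (a :: s')) as [m [Hm Hmin]]; [discriminate |].
  assert (Hincl : incl (a :: s') (seq m (S d))).
  { intros j Hj. apply in_seq.
    specialize (Hmin j Hj). specialize (Hspread m j Hm Hj). lia. }
  pose proof (NoDup_incl_length Hnd Hincl) as Hlen.
  rewrite length_seq in Hlen. exact Hlen.
Qed.

Theorem mainTheorem1 :
  forall (Node : Type) (C : Node -> R -> R) (start : Node -> R) (delta L : R),
    0 <= delta -> delta <= 1 / 7 -> 0 < L ->
    (forall w : Node, drift_bounded delta (C w)) ->
    forall (v : Node) (k : nat), (1 <= k)%nat ->
    forall u : Node, u <> v ->
    forall s : list nat, NoDup s ->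
      (forall j : nat, In j s ->
         (1 <= j)%nat /\ frames_overlap (C v) (start v) k (C u) (start u) j L) ->
      (length s <= 3)%nat.
Proof.
  intros Node C start delta L d0 d1 HL D v k _ u _ s Hnd Hs.
  apply (NoDup_length_le_of_spread s 2 Hnd).
  intros i j Hi Hj.
  destruct (Hs i Hi) as [_ [t1 [Fv1 Fu1]]].
  destruct (Hs j Hj) as [_ [t2 [Fv2 Fu2]]].
  apply (overlap_index_gap delta L (C v) (C u) (start v) (start u) k i j t1 t2);
    auto; lra.
Qed.
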